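(* Let $A,B\subseteq\mathbb{N}$ with $A\cap B=\emptyset$ such that $\lim_{n\to\infty}\frac{B(n)-A(n)}{n}$ exists and is $>0$. Then there is a subset $D\subseteq B$ with $\lim_{n\to\infty}\frac{D(n)-A(n)}{n}=0$. In particular, $B\setminus D\in\mathcal{D}$.
   Context: $\mathbb{N}=\{1,2,3,\dots\}$. For $A\subseteq\mathbb{N}$ let $A(n)=|A\cap[1,n]|$. Let $\mathcal{D}$ be the collection of all $A\subseteq\mathbb{N}$ for which the asymptotic density $d(A)=\lim_{n\to\infty}\frac{A(n)}{n}$ exists. *)

From Stdlib Require Import Reals Lra Lia Arith.
From Coquelicot Require Import Coquelicot.

(* A subset of N = {1,2,3,...} is represented by its indicator function
   nat -> bool; the value at 0 is irrelevant (0 is not in N). *)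

Fixpoint cnt (A : nat -> bool) (n : nat) : nat :=
  match n with
  | O => O
  | S m => (cnt A m + (if A (S m) then 1 else 0))%nat
  end.

Definition has_density (A : nat -> bool) : Prop :=
  exists d : R, is_lim_seq (fun n => INR (cnt A n) / INR n) d.

(** Match the elements of [B], in increasing order, with still unmatched
    smaller elements of [A], and let [D] be the set of matched elements of [B].
    Then [A(n) = D(n) + U(n)], where [U(n)] counts the elements of [A ∩ [1,n]]
    still unmatched at time [n].  The counter [U] is the walk
    [h(n) = A(n) - B(n)] reflected at its running minimum, so [U(n)] is an
    increment [h(n) - h(m)] with [m <= n]; as [h(n)/n] tends to the
    nonpositive limit [-l], such increments are [o(n)]. *)

From Stdlib Require Import Reals Lra Lia.
From Coquelicot Require Import Coquelicot.

Lemma initial_segment_bounded_below (u : nat -> R) (N : nat) :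
  exists K, 0 <= K /\ forall m, (m < N)%nat -> - K <= u m.
Proof.
  induction N as [|N [K [HK0 HK]]].
  - exists 0. split; [lra | intros m Hm; lia].
  - exists (Rmax K (- u N)). split; [pose proof (Rmax_l K (- u N)); lra|].
    intros m Hm.
    destruct (Nat.eq_dec m N) as [->|Hne].
    + pose proof (Rmax_r K (- u N)). lra.
    + pose proof (Rmax_l K (- u N)). pose proof (HK m ltac:(lia)). lra.
Qed.

Lemma is_lim_seq_const_div_INR (K : R) :
  is_lim_seq (fun n => K / INR n) 0.
Proof.
  replace (Finite 0) with (Rbar_mult K (Rbar_inv p_infty))
    by (simpl; f_equal; ring).
  apply is_lim_seq_scal_l, is_lim_seq_inv; [exact is_lim_seq_INR | discriminate].
Qed.

(* The hypothesis [c <= 0] is what makes an increment [u n - u m] with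
   [m <= n] small: it cannot profit from the linear drift of [u]. *)
Lemma is_lim_seq_increment_div_INR (u g : nat -> R) (c : R) :
  c <= 0 ->
  is_lim_seq (fun n => u n / INR n) c ->
  (forall n, 0 <= g n) ->
  (forall n, exists m, (m <= n)%nat /\ g n = u n - u m) ->
  is_lim_seq (fun n => g n / INR n) 0.
Proof.
  intros Hc Hu Hg0 Hg.
  apply is_lim_seq_spec. intros eps.
  set (e := eps / 3).
  assert (He : 0 < e) by (unfold e; destruct eps; simpl; lra).
  assert (Hlin : eventually (fun n => (c - e) * INR n < u n < (c + e) * INR n)).
  { apply is_lim_seq_spec in Hu. destruct (Hu (mkposreal e He)) as [N HN].
    exists (S N). intros n Hn.
    assert (Hn0 : 0 < INR n) by (apply lt_0_INR; lia).
    specialize (HN n ltac:(lia)). simpl in HN. apply Rabs_def2 in HN.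
    replace (u n) with (u n / INR n * INR n) by (field; lra).
    split; nra. }
  destruct Hlin as [N HN].
  destruct (initial_segment_bounded_below u N) as [K [HK0 HK]].
  pose proof (is_lim_seq_const_div_INR K) as HKlim.
  apply is_lim_seq_spec in HKlim. destruct (HKlim (mkposreal e He)) as [N' HN'].
  exists (max 1 (max N N')). intros n Hn.
  assert (Hn0 : 0 < INR n) by (apply lt_0_INR; lia).
  specialize (HN' n ltac:(lia)). simpl in HN'.
  rewrite Rminus_0_r in HN'. pose proof (Rle_abs (K / INR n)).
  destruct (HN n ltac:(lia)) as [_ Hun].
  destruct (Hg n) as [m [Hmn Hgn]].
  assert (Hen : 0 <= e * INR n) by (apply Rmult_le_pos; lra).
  assert (Hbound : g n < 2 * e * INR n + K).
  { rewrite Hgn. destruct (Nat.le_gt_cases N m) as [Hm|Hm].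
    - destruct (HN m Hm) as [Hum _].
      assert (INR m <= INR n) by (apply le_INR; exact Hmn).
      assert (c * (INR n - INR m) <= 0)
        by (rewrite <- (Rmult_0_l (INR n - INR m)); apply Rmult_le_compat_r; lra).
      assert (e * INR m <= e * INR n) by (apply Rmult_le_compat_l; lra).
      lra.
    - pose proof (HK m Hm).
      assert (c * INR n <= 0)
        by (rewrite <- (Rmult_0_l (INR n)); apply Rmult_le_compat_r; lra).
      lra. }
  rewrite Rminus_0_r, Rabs_pos_eq by (apply Rdiv_le_0_compat; auto).
  assert (Hsplit : (2 * e * INR n + K) / INR n = 2 * e + K / INR n)
    by (field; lra).
  apply Rle_lt_trans with ((2 * e * INR n + K) / INR n).
  - apply Rmult_le_compat_r; [apply Rlt_le, Rinv_0_lt_compat; exact Hn0 | lra].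
  - rewrite Hsplit. unfold e in *. destruct eps; simpl in *. lra.
Qed.

Lemma cnt_diff_add (B D : nat -> bool) (n : nat) :
  (forall k, D k = true -> B k = true) ->
  (cnt (fun k => andb (B k) (negb (D k))) n + cnt D n = cnt B n)%nat.
Proof.
  intros HDB. induction n as [|n IH]; [reflexivity|]. simpl.
  destruct (D (S n)) eqn:HD; [rewrite (HDB _ HD)|]; destruct (B (S n)); simpl; lia.
Qed.

Fixpoint unmatched (A B : nat -> bool) (n : nat) : nat :=
  match n with
  | O => O
  | S m => if A (S m) then S (unmatched A B m)
           else if B (S m) then pred (unmatched A B m) else unmatched A B m
  end.

Definition greedy_matched (A B : nat -> bool) (n : nat) : bool :=
  match n with
  | O => false
  | S m => andb (B (S m)) (Nat.ltb 0 (unmatched A B m))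
  end.

Lemma greedy_matched_sub (A B : nat -> bool) (n : nat) :
  greedy_matched A B n = true -> B n = true.
Proof.
  destruct n as [|n]; simpl; [discriminate|].
  intros H. apply andb_prop in H. tauto.
Qed.

Definition excess (A B : nat -> bool) (n : nat) : R :=
  INR (cnt A n) - INR (cnt B n).

Section GreedyMatching.

Variables A B : nat -> bool.
Hypothesis disjoint : forall n, (1 <= n)%nat -> A n = true -> B n = false.

Lemma cnt_greedy_matched (n : nat) :
  cnt A n = (cnt (greedy_matched A B) n + unmatched A B n)%nat.
Proof.
  induction n as [|n IH]; [reflexivity|].
  cbn [cnt unmatched greedy_matched].
  destruct (A (S n)) eqn:HA.
  - rewrite (disjoint (S n)) by (lia || auto). simpl. lia.
  - destruct (B (S n)); simpl; [|lia].
    destruct (unmatched A B n); simpl; lia.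
Qed.

(* [m] is the last time at which every element of [A] was matched. *)
Lemma unmatched_excess_increment (n : nat) :
  exists m, (m <= n)%nat /\ INR (unmatched A B n) = excess A B n - excess A B m.
Proof.
  induction n as [|n [m [Hmn IH]]].
  - exists O. split; [lia|]. unfold excess. simpl. lra.
  - assert (Hstep : excess A B (S n) = excess A B n
                      + INR (if A (S n) then 1 else 0) - INR (if B (S n) then 1 else 0))
      by (unfold excess; simpl cnt; rewrite !plus_INR; lra).
    simpl unmatched. destruct (A (S n)) eqn:HA.
    + rewrite (disjoint (S n)) in Hstep by (lia || auto).
      exists m. split; [lia|]. rewrite S_INR. simpl in Hstep. lra.
    + destruct (B (S n)) eqn:HB.
      * destruct (unmatched A B n) as [|k] eqn:Hk.
        -- exists (S n). split; [lia | simpl; lra].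
        -- exists m. split; [lia|]. rewrite S_INR in IH. simpl in *. lra.
      * exists m. split; [lia|]. simpl in Hstep. lra.
Qed.

Lemma unmatched_sublinear (l : R) :
  0 <= l ->
  is_lim_seq (fun n => (INR (cnt B n) - INR (cnt A n)) / INR n) l ->
  is_lim_seq (fun n => INR (unmatched A B n) / INR n) 0.
Proof.
  intros Hl HL.
  apply (is_lim_seq_increment_div_INR (excess A B) _ (- l)); [lra| | |].
  - apply is_lim_seq_ext with (fun n => - ((INR (cnt B n) - INR (cnt A n)) / INR n)).
    + intros n. unfold excess, Rdiv. ring.
    + apply (is_lim_seq_opp _ l). exact HL.
  - intros n. apply pos_INR.
  - exact unmatched_excess_increment.
Qed.

Lemma greedy_matched_balance (l : R) :
  0 <= l ->
  is_lim_seq (fun n => (INR (cnt B n) - INR (cnt A n)) / INR n) l ->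
  is_lim_seq (fun n => (INR (cnt (greedy_matched A B) n) - INR (cnt A n)) / INR n) 0.
Proof.
  intros Hl HL.
  apply is_lim_seq_ext with (fun n => - (INR (unmatched A B n) / INR n)).
  - intros n. rewrite cnt_greedy_matched, plus_INR. unfold Rdiv. ring.
  - replace (Finite 0) with (Rbar_opp 0) by (simpl; f_equal; ring).
    apply -> is_lim_seq_opp. exact (unmatched_sublinear l Hl HL).
Qed.

End GreedyMatching.

Theorem lemma3p5 (A B : nat -> bool) :
  (forall n : nat, (1 <= n)%nat -> A n = true -> B n = false) ->
  (exists l : R, (l > 0)%R /\
     is_lim_seq (fun n => ((INR (cnt B n) - INR (cnt A n)) / INR n)%R) l) ->
  exists D : nat -> bool,
    (forall n : nat, D n = true -> B n = true) /\
    is_lim_seq (fun n => ((INR (cnt D n) - INR (cnt A n)) / INR n)%R) 0%R /\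
    has_density (fun n => andb (B n) (negb (D n))).
Proof.
  intros disjoint [l [Hl HL]].
  pose proof (greedy_matched_sub A B) as HDB.
  pose proof (greedy_matched_balance A B disjoint l (Rlt_le _ _ Hl) HL) as HD.
  exists (greedy_matched A B). split; [exact HDB | split; [exact HD|]].
  exists (l - 0).
  apply is_lim_seq_ext with (fun n =>
    (INR (cnt B n) - INR (cnt A n)) / INR n
    - (INR (cnt (greedy_matched A B) n) - INR (cnt A n)) / INR n).
  - intros n. rewrite <- (cnt_diff_add B (greedy_matched A B) n HDB), plus_INR.
    unfold Rdiv. ring.
  - apply is_lim_seq_minus'; assumption.
Qed.
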